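(* Let $\beta\in[0,1)$ and let $U:\mathbb{R}^d\to\mathbb{R}$ be twice continuously differentiable with $\nabla U(0)=0$ and $\sup_x\|\mathrm{D}^2U(x)\|\le\mathtt{L}$. Assume there exist $\mathtt{m}_\beta>0$, $\mathtt{L}_\beta,\mathtt{K}_\beta\ge0$ with $\frac{\mathtt{L}_\beta}{1+\|x\|^{3\beta/4}}\ge\mathrm{D}^2U(x)[y,y]\ge\frac{\mathtt{m}_\beta}{1+\|x\|^\beta}$ for all $\|x\|\ge\mathtt{K}_\beta$, $\|y\|=1$. Let $\bar\gamma\le(4\mathtt{L})^{-1}\wedge(\mathtt{m}_\beta^3/(2^4\mathtt{L}_\beta^4))$, $\epsilon=(\mathtt{m}_\beta^3/2^4)\{2^{3/2}\mathtt{L}_\beta^2+2^{-1/2}\bar\gamma^{1/2}\mathtt{L}_\beta^3\}^{-1}$ and $$C_{2,\bar\gamma,\beta}=2\mathtt{L}+2^{3/2}\mathtt{L}_\beta^2\epsilon^{-1}+(\bar\gamma/2)\mathtt{L}^2+2^{-1/2}\bar\gamma^{3/2}\mathtt{L}_\beta^3\epsilon^{-1}.$$ Let $\tilde{\mathtt{K}}_\beta=[4\mathtt{K}_\beta(1+\mathtt{L}/\mathtt{m}_\beta)]\vee[4\mathtt{K}_\beta(1+\mathtt{L}/\mathtt{m}_\beta)]^{1/(1-\beta)}$ and $\bar{\mathtt{K}}_\beta=[2\mathtt{L}\mathtt{K}_\beta/\mathtt{L}_\beta]\vee[2\mathtt{L}\mathtt{K}_\beta/\mathtt{L}_\beta]^{1/(1-3\beta/4)}$.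 Then for all $\gamma\in(0,\bar\gamma]$ and $x,z\in\mathbb{R}^d$ with $\|x\|\ge\max(2\mathtt{K}_\beta,\tilde{\mathtt{K}}_\beta,\bar{\mathtt{K}}_\beta)$ and $\|z\|\le\|x\|/(4\sqrt{2\gamma})$, $$\tau_\gamma(x,z)\le C_{2,\bar\gamma,\beta}\gamma\|z\|^2.$$
   Context: For $\gamma>0$ and $x,z\in\mathbb{R}^d$, $\tau_\gamma(x,z)=U(x-\gamma\nabla U(x)+\sqrt{2\gamma}z)-U(x)+\frac12\big\{\|z-(\gamma/2)^{1/2}[\nabla U(x)+\nabla U(x-\gamma\nabla U(x)+\sqrt{2\gamma}z)]\|^2-\|z\|^2\big\}$. *)

From HB Require Import structures.
From mathcomp Require Import all_boot all_order all_algebra.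
From mathcomp Require Import all_classical all_reals all_analysis.
Set Implicit Arguments. Unset Strict Implicit. Unset Printing Implicit Defensive.
Import Order.TTheory GRing.Theory Num.Theory.
Import numFieldNormedType.Exports.
Local Open Scope ring_scope.

Section Defs.
Variables (R : realType) (d : nat).

(* Euclidean norm on R^d (the library norm on matrices is the sup norm). *)
Definition enorm (x : 'rV[R]_d) : R := Num.sqrt (\sum_(i < d) (x 0 i) ^+ 2).

Definition evec (i : 'I_d) : 'rV[R]_d := delta_mx 0 i.

Definition grad (U : 'rV[R]_d -> R) (x : 'rV[R]_d) : 'rV[R]_d :=
  \row_i derive U x (evec i).

Definition hess (U : 'rV[R]_d -> R) (x : 'rV[R]_d) : 'M[R]_d :=
  \matrix_(i, j) derive (fun y => derive U y (evec i)) x (evec j).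

Definition hessf (U : 'rV[R]_d -> R) (x y v : 'rV[R]_d) : R :=
  \sum_(i < d) \sum_(j < d) y 0 i * hess U x i j * v 0 j.

Definition C2 (U : 'rV[R]_d -> R) : Prop :=
  (forall x, differentiable U x) /\
  (forall x, differentiable (grad U) x) /\
  continuous (hess U).

Definition tau (U : 'rV[R]_d -> R) (gamma : R) (x z : 'rV[R]_d) : R :=
  let y := x - gamma *: grad U x + Num.sqrt (2 * gamma) *: z in
  U y - U x +
  2^-1 * (enorm (z - Num.sqrt (gamma / 2) *: (grad U x + grad U y)) ^+ 2
          - enorm z ^+ 2).

End Defs.

(** Write [y = x - gamma grad U(x) + sqrt(2 gamma) z] and [w = grad U(y) - grad U(x)].
    Expanding the square in [tau] gives
    [tau = - D_U(x, y) + sqrt(2 gamma)/2 <w, z> + gamma/4 |w|^2],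
    where [D_U(x, y) = U(x) - U(y) - <grad U(y), x - y>] is the Bregman divergence.
    Since [grad U(0) = 0] and [|D^2 U| <= L], the step [y - x] has norm at most [|x|/2], so
    the segment [[x, y]] stays in the annulus [|x|/2 <= |p| <= 2|x|], where the curvature
    hypothesis gives [m |v|^2 <= D^2 U(p)[v, v] <= Lam |v|^2] with
    [m = mb / (2 (1 + |x|^beta))] and [Lam = 2 Lb / (1 + |x|^(3 beta/4))].
    Hence [D_U(x, y) >= m |y - x|^2 / 2], and, the Hessian being symmetric (Schwarz),
    [|w| <= Lam |y - x|].  Comparing the two curvature bounds at [x] and using
    [(1 + A^4)^3 <= 2 (1 + A^3)^4] for [A = |x|^(beta/4)] yields [gamma Lam^2 <= m] and
    [Lam^2 <= 2 m C]; completing the square in [|y - x|] then bounds [tau] by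
    [C gamma |z|^2]. *)

From HB Require Import structures.
From mathcomp Require Import all_boot all_order all_algebra.
From mathcomp Require Import all_classical all_reals all_analysis.
From mathcomp Require Import ring lra.
Set Implicit Arguments. Unset Strict Implicit. Unset Printing Implicit Defensive.
Import Order.TTheory GRing.Theory Num.Theory.
Import numFieldNormedType.Exports.
Local Open Scope ring_scope.

Lemma discriminant_le (R : realFieldType) (A B C : R) : 0 <= C ->
  (forall t, 0 <= A + 2 * t * B + t ^+ 2 * C) -> B ^+ 2 <= A * C.
Proof.
move=> C0; have [->|Cn0] := eqVneq C 0 => H.
  have [->|Bn0] := eqVneq B 0; first by rewrite expr0n mulr0.
  have := H (- (A + 1) / (2 * B)).
  rewrite !mulr0 addr0 (_ : _ * B = - (A + 1)); first lra.
  by field; rewrite Bn0.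
have := H (- B / C).
have -> : A + 2 * (- B / C) * B + (- B / C) ^+ 2 * C = A - B ^+ 2 / C.
  by field.
by rewrite subr_ge0 ler_pdivrMr ?lt_def ?Cn0// mulrC.
Qed.

Section Euclid.
Variables (R : realType) (n : nat).
Implicit Types (a b c v w : 'rV[R]_n) (M : 'M[R]_n).

Definition dot a b : R := (a *m b^T) 0 0.

Lemma dot_sumE a b : dot a b = \sum_(i < n) a 0 i * b 0 i.
Proof. by rewrite /dot mxE; apply: eq_bigr => i _; rewrite mxE. Qed.

Lemma dotC a b : dot a b = dot b a.
Proof. by rewrite /dot -[in LHS](trmxK a) -trmx_mul mxE. Qed.

Lemma dotDl a b c : dot (a + b) c = dot a c + dot b c.
Proof. by rewrite /dot mulmxDl mxE. Qed.

Lemma dotZl k a b : dot (k *: a) b = k * dot a b.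
Proof. by rewrite /dot -scalemxAl mxE. Qed.

Lemma dotNl a b : dot (- a) b = - dot a b.
Proof. by rewrite -scaleN1r dotZl mulN1r. Qed.

Lemma dotBl a b c : dot (a - b) c = dot a c - dot b c.
Proof. by rewrite dotDl dotNl. Qed.

Lemma dot0l a : dot 0 a = 0.
Proof. by rewrite /dot mul0mx mxE. Qed.

Lemma dotDr a b c : dot a (b + c) = dot a b + dot a c.
Proof. by rewrite dotC dotDl !(dotC a). Qed.

Lemma dotZr k a b : dot a (k *: b) = k * dot a b.
Proof. by rewrite dotC dotZl dotC. Qed.

Lemma dotNr a b : dot a (- b) = - dot a b.
Proof. by rewrite dotC dotNl dotC. Qed.

Lemma dot_mulmx_sym M a b : M^T = M -> dot a (b *m M) = dot b (a *m M).
Proof. by move=> MT; rewrite [RHS]dotC /dot trmx_mul MT mulmxA. Qed.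

Lemma enorm_sqr a : enorm a ^+ 2 = dot a a.
Proof.
rewrite dot_sumE sqr_sqrtr; last by apply: sumr_ge0 => i _; exact: sqr_ge0.
by apply: eq_bigr => i _; rewrite expr2.
Qed.

Lemma enorm_ge0 a : 0 <= enorm a.
Proof. exact: sqrtr_ge0. Qed.

Lemma dotxx_ge0 a : 0 <= dot a a.
Proof. by rewrite -enorm_sqr sqr_ge0. Qed.

Lemma enorm_eq0 a : (enorm a == 0) = (a == 0).
Proof.
apply/idP/idP => [|/eqP->]; last by rewrite /enorm big1 ?sqrtr0// => i _; rewrite mxE expr0n.
rewrite sqrtr_eq0 => le0; apply/eqP/rowP => i; rewrite mxE.
have sum0 : \sum_(j < n) a 0 j ^+ 2 = 0.
  by apply/eqP; rewrite eq_le le0 sumr_ge0// => j _; exact: sqr_ge0.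
have /eqP := psumr_eq0P (fun j _ => sqr_ge0 (a 0 j)) sum0 (i := i) isT.
by rewrite sqrf_eq0 => /eqP.
Qed.

Lemma psd_cauchy_schwarz M a b : M^T = M -> (forall v, 0 <= dot v (v *m M)) ->
  dot a (b *m M) ^+ 2 <= dot a (a *m M) * dot b (b *m M).
Proof.
move=> MT psd; apply: discriminant_le => // t.
have := psd (a + t *: b).
rewrite mulmxDl -scalemxAl dotDl !dotDr !dotZl !dotZr (dot_mulmx_sym b a MT).
lra.
Qed.

Lemma cauchy_schwarz a b : dot a b <= enorm a * enorm b.
Proof.
have psd1 v : 0 <= dot v (v *m 1%:M) by rewrite mulmx1 dotxx_ge0.
have := psd_cauchy_schwarz a b (trmx1 _ _) psd1; rewrite !mulmx1 -!enorm_sqr -exprMn.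
rewrite -(real_normK (num_real (dot a b))) ler_sqr ?nnegrE ?mulr_ge0 ?enorm_ge0//.
exact: le_trans (ler_norm _).
Qed.

Lemma enormZ k a : enorm (k *: a) = `|k| * enorm a.
Proof.
apply/eqP; rewrite -(@eqrXn2 _ 2) ?mulr_ge0 ?enorm_ge0//.
by rewrite exprMn !enorm_sqr dotZl dotZr mulrA -expr2 real_normK ?num_real.
Qed.

Lemma enormN a : enorm (- a) = enorm a.
Proof. by rewrite -scaleN1r enormZ normrN normr1 mul1r. Qed.

Lemma ler_enormD a b : enorm (a + b) <= enorm a + enorm b.
Proof.
rewrite -ler_sqr ?nnegrE ?addr_ge0 ?enorm_ge0// enorm_sqr dotDl !dotDr sqrrD.
by rewrite !enorm_sqr (dotC b a); have := cauchy_schwarz a b; lra.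
Qed.

Lemma lerB_enormD a b : enorm a - enorm b <= enorm (a + b).
Proof. by have := ler_enormD (a + b) (- b); rewrite addrK enormN; lra. Qed.

Lemma enorm_line_bounds a b t : enorm b <= enorm a / 2 -> 0 <= t <= 1 ->
  enorm a / 2 <= enorm (a + t *: b) <= 2 * enorm a.
Proof.
move=> ba /andP[t0 t1]; have := ler_enormD a (t *: b); have := lerB_enormD a (t *: b).
rewrite enormZ ger0_norm//; have := enorm_ge0 a; have := enorm_ge0 b.
have : t * enorm b <= enorm b by rewrite ler_piMl ?enorm_ge0.
by move=> *; apply/andP; split; lra.
Qed.

Lemma dot_mulmx_homogeneous_bounds M lo hi v :
  (forall y, enorm y = 1 -> lo <= dot y (y *m M) <= hi) ->
  lo * enorm v ^+ 2 <= dot v (v *m M) <= hi * enorm v ^+ 2.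
Proof.
move=> H; have [->|v0] := eqVneq v 0.
  by rewrite mul0mx dot0l enorm_sqr dot0l !mulr0 lexx.
have nv : 0 < enorm v by rewrite lt_def enorm_eq0 v0 enorm_ge0.
have /H : enorm ((enorm v)^-1 *: v) = 1 by rewrite enormZ ger0_norm ?invr_ge0 ?mulVf ?gt_eqF// ltW.
rewrite -scalemxAl dotZl dotZr mulrA -expr2 exprVn => /andP[lo_le le_hi].
by move: lo_le le_hi; rewrite !(mulrC (_ ^- 2)) ler_pdivlMr ?ler_pdivrMr ?exprn_gt0 // => -> ->.
Qed.

Lemma enorm_mulmx_psd_le M (Lam : R) v : M^T = M -> 0 <= Lam ->
  (forall w, 0 <= dot w (w *m M) <= Lam * enorm w ^+ 2) ->
  enorm (v *m M) <= Lam * enorm v.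
Proof.
move=> MT Lam0 bnd; set w := v *m M.
have := psd_cauchy_schwarz w v MT (fun u => proj1 (andP (bnd u))).
rewrite -/w -enorm_sqr => cs.
have /andP[Qw0 Qw] := bnd w; have /andP[Qv0 Qv] := bnd v.
have nw := enorm_ge0 w; have nv := enorm_ge0 v.
have : (enorm w ^+ 2) ^+ 2 <= (Lam * enorm w * enorm v) ^+ 2.
  apply: le_trans cs _.
  rewrite (_ : _ ^+ 2 = (Lam * enorm w ^+ 2) * (Lam * enorm v ^+ 2)); last by ring.
  exact: ler_pM.
rewrite ler_sqr ?nnegrE ?exprn_ge0 ?mulr_ge0// expr2 => ww.
have [->|w0] := eqVneq (enorm w) 0; first by rewrite mulr_ge0.
by rewrite -(ler_pM2r (_ : 0 < enorm w)) ?lt_def ?w0// mulrAC.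
Qed.

End Euclid.

Lemma mvt_is_derive (R : realType) (f df : R -> R) (a b : R) : a <= b ->
  (forall x, is_derive x (1 : R) f (df x)) ->
  exists2 c, a <= c <= b & f b - f a = df c * (b - a).
Proof.
move=> ab fdf; have derf x : derivable f x (1 : R) by have [] := fdf x.
have [c cab ->] := MVT_segment ab (fun x _ => fdf x)
  (derivable_within_continuous (fun x _ => derf x)).
by exists c => //; move: cab; rewrite in_itv.
Qed.

Lemma second_order_gap_ge (R : realType) (f f' f'' : R -> R) (c : R) :
  (forall t, is_derive t (1 : R) f (f' t)) -> (forall t, is_derive t (1 : R) f' (f'' t)) ->
  (forall t, 0 <= t <= 1 -> c <= f'' t) -> c / 2 <= f 0 - f 1 + f' 1.
Proof.
move=> ff' f'f'' cf''.
(* [h' s = f' s - f' 1 + c (1 - s) <= 0] on [[0, 1]], hence [h 1 <= h 0]. *)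
pose h s := f s + (c - f' 1) * s - c / 2 * s ^+ 2.
have hh' t : is_derive t (1 : R) h (f' t + (c - f' 1) - c * t).
  apply: is_derive_eq; rewrite /GRing.scale/=; lra.
have [xi /andP[xi0 xi1] hE] := mvt_is_derive ler01 hh'.
have [eta /andP[xi_eta eta1] f'E] := mvt_is_derive xi1 f'f''.
have : c * (1 - xi) <= f'' eta * (1 - xi).
  by rewrite ler_wpM2r ?subr_ge0// cf''// (le_trans xi0 xi_eta) eta1.
by move: hE; rewrite /h expr1n expr0n /=; lra.
Qed.

Section LineDerivative.
Variables (R : realType) (V W : normedModType R).

Lemma is_derive_line (F : V -> W) (a v : V) (t : R) :
  derivable F (a + t *: v) v ->
  is_derive t (1 : R) (fun s : R => F (a + s *: v)) ('D_v F (a + t *: v)).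
Proof.
have E : (fun h : R => h^-1 *: (((fun s => F (a + s *: v)) \o shift t) (h *: 1)
             - F (a + t *: v)))
       = (fun h : R => h^-1 *: ((F \o shift (a + t *: v)) (h *: v) - F (a + t *: v))).
  by apply: funext => h /=; rewrite scaler1 scalerDl addrCA addrA.
by move=> dF; apply: DeriveDef; rewrite /derivable /derive E.
Qed.

Lemma is_derive_dotl n (F : V -> 'rV[R]_n) (a v : V) (w : 'rV[R]_n) :
  derivable F a v -> is_derive a v (fun y => dot (F y) w) (dot ('D_v F a) w).
Proof.
move=> dF; have dFi i : is_derive a v (fun y => F y 0 i) ('D_v F a 0 i).
  by apply: DeriveDef; [exact: (derivable_mxP F a v).1 dF 0 i|rewrite derive_mx// mxE].
have -> : (fun y => dot (F y) w) = \sum_(i < n) w 0 i *: (fun y => F y 0 i).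
  by apply: funext => y; rewrite fct_sumE dot_sumE; apply: eq_bigr => i _; rewrite /= mulrC.
rewrite dot_sumE; apply: is_derive_eq.
by apply: eq_bigr => i _; rewrite mulrC.
Qed.

End LineDerivative.

Section Gradient.
Variables (R : realType) (d : nat) (U : 'rV[R]_d -> R).
Implicit Types (p q v w : 'rV[R]_d).

Lemma hessfE q y v : hessf U q y v = dot y (v *m (hess U q)^T).
Proof.
rewrite /hessf dot_sumE; apply: eq_bigr => i _; rewrite mxE mulr_sumr.
by apply: eq_bigr => j _; rewrite !mxE [v 0 j * _]mulrC mulrA.
Qed.

Lemma deriveE_grad q v : differentiable U q -> 'D_v U q = dot (grad U q) v.
Proof.
move=> dU; rewrite deriveE // {1}(row_sum_delta v) linear_sum dot_sumE.
by apply: eq_bigr => j _; rewrite linearZ /= -deriveE // mxE mulrC.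
Qed.

Lemma derive_grad q v : differentiable (grad U) q -> 'D_v (grad U) q = v *m (hess U q)^T.
Proof.
move=> dG; apply/rowP => i.
rewrite deriveE // {1}(row_sum_delta v) linear_sum summxE !mxE.
apply: eq_bigr => j _; rewrite linearZ mxE -deriveE // !mxE mulrC derive_mx.
  rewrite mxE mulrC (_ : (fun y => grad U y 0 i) = 'D_(evec R i) U)//.
  by apply: funext => y; rewrite mxE.
by apply: diff_derivable; exact: dG.
Qed.

Definition bregman x y : R := U x - U y - dot (grad U y) (x - y).

Definition proposal (gamma : R) (x z : 'rV[R]_d) : 'rV[R]_d :=
  x - gamma *: grad U x + Num.sqrt (2 * gamma) *: z.

Lemma tauE gamma x z : 0 < gamma ->
  tau U gamma x z = - bregman x (proposal gamma x z)
    + Num.sqrt (2 * gamma) / 2 * dot (grad U (proposal gamma x z) - grad U x) z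
    + gamma / 4 * enorm (grad U (proposal gamma x z) - grad U x) ^+ 2.
Proof.
move=> gamma0; rewrite /tau /= -/(proposal gamma x z) /bregman !enorm_sqr.
set y := proposal gamma x z.
set s := Num.sqrt (2 * gamma); set g0 := grad U x; set g1 := grad U y.
have s2 : s ^+ 2 = 2 * gamma by rewrite sqr_sqrtr// mulr_ge0// ltW.
have -> : Num.sqrt (gamma / 2) = s / 2.
  rewrite -[gamma / 2](_ : (s / 2) ^+ 2 = _) ?sqrtr_sqr ?ger0_norm ?divr_ge0 ?sqrtr_ge0//.
  by rewrite expr_div_n s2; field.
have xy : x - y = gamma *: g0 - s *: z.
  by rewrite /y /proposal opprD opprB addrA subrKC.
rewrite xy !(dotBl, dotDl, dotDr, dotNl, dotNr, dotZl, dotZr).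
rewrite (dotC z g0) (dotC z g1) (dotC g1 g0).
have -> : gamma = s ^+ 2 / 2 by rewrite s2; field.
by field.
Qed.

Hypothesis U_C2 : C2 U.
Let dU q : differentiable U q := U_C2.1 q.
Let dG q : differentiable (grad U) q := U_C2.2.1 q.

Lemma is_derive_U_line p v t :
  is_derive t (1 : R) (fun s => U (p + s *: v)) (dot (grad U (p + t *: v)) v).
Proof. by rewrite -deriveE_grad//; apply: is_derive_line; exact: diff_derivable. Qed.

Lemma is_derive_grad_line p v w t :
  is_derive t (1 : R) (fun s => dot (grad U (p + s *: v)) w) (hessf U (p + t *: v) w v).
Proof.
have [dF DF] := is_derive_line (diff_derivable (dG (p + t *: v))).
have -> : hessf U (p + t *: v) w v = dot ('D_1 (fun s : R => grad U (p + s *: v)) t) w.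
  by rewrite DF derive_grad; [rewrite hessfE dotC | exact: dG].
exact: is_derive_dotl.
Qed.

Lemma gradB_mvt p v w : exists2 c, 0 <= c <= 1 &
  dot (grad U (p + v) - grad U p) w = hessf U (p + c *: v) w v.
Proof.
have [c c01 E] := mvt_is_derive ler01 (is_derive_grad_line p v w).
by exists c => //; move: E; rewrite scale1r scale0r addr0 subr0 mulr1 dotBl.
Qed.

Lemma enorm_gradB_le p v (Lam : R) :
  (forall t, 0 <= t <= 1 -> enorm (v *m (hess U (p + t *: v))^T) <= Lam * enorm v) ->
  enorm (grad U (p + v) - grad U p) <= Lam * enorm v.
Proof.
move=> opn; set w := _ - _; have [c c01 E] := gradB_mvt p v w.
have Lv := opn c c01; have Hv0 := enorm_ge0 (v *m (hess U (p + c *: v))^T).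
have : enorm w * enorm w <= enorm w * (Lam * enorm v).
  rewrite -expr2 enorm_sqr E hessfE; apply: le_trans (cauchy_schwarz _ _) _.
  by rewrite ler_wpM2l ?enorm_ge0.
have [->|w0] := eqVneq (enorm w) 0; first by rewrite (le_trans Hv0).
by rewrite ler_pM2l // lt_def w0 enorm_ge0.
Qed.

Lemma bregman_ge p v (c : R) :
  (forall t, 0 <= t <= 1 -> c <= hessf U (p + t *: v) v v) ->
  c / 2 <= bregman p (p + v).
Proof.
move=> cH; have := second_order_gap_ge (is_derive_U_line p v) (is_derive_grad_line p v v) cH.
by rewrite /bregman scale1r scale0r addr0 opprD addNKr dotNr opprK.
Qed.

End Gradient.

Section HessianSymmetry.
Local Open Scope classical_set_scope.
Variables (R : realType) (d : nat) (U : 'rV[R]_d -> R).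
Hypothesis U_C2 : C2 U.
Implicit Types (q : 'rV[R]_d) (i j : 'I_d) (h : R).

Definition second_diff q i j h : R :=
  U (q + h *: evec R i + h *: evec R j) - U (q + h *: evec R i)
  - U (q + h *: evec R j) + U q.

Lemma second_diff_sym q i j h : second_diff q i j h = second_diff q j i h.
Proof. by rewrite /second_diff [q + _ + h *: evec R j]addrAC; ring. Qed.

Lemma is_derive_partial_line q i j t :
  is_derive t (1 : R) (fun s => 'D_(evec R i) U (q + s *: evec R j))
    (hess U (q + t *: evec R j) i j).
Proof.
rewrite /hess mxE; apply: (is_derive_line (F := fun y => 'D_(evec R i) U y)).
have -> : (fun y => 'D_(evec R i) U y) = fun y => grad U y 0 i.
  by apply: funext => y; rewrite mxE.
exact: (derivable_mxP _ _ _).1 (diff_derivable (U_C2.2.1 _)) 0 i.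
Qed.

Lemma second_diff_mvt q i j h : 0 <= h -> exists xi eta,
  [/\ 0 <= xi <= h, 0 <= eta <= h &
      second_diff q i j h = h ^+ 2 * hess U (q + xi *: evec R i + eta *: evec R j) i j].
Proof.
move=> h0; pose e := @evec R d.
pose g s := U ((q + h *: e j) + s *: e i) - U (q + s *: e i).
have dg s : is_derive s (1 : R) g
    ('D_(e i) U ((q + h *: e j) + s *: e i) - 'D_(e i) U (q + s *: e i)).
  by apply: is_deriveB; apply: is_derive_line; exact: diff_derivable (U_C2.1 _).
have [xi xih gE] := mvt_is_derive h0 dg.
have [eta etah kE] := mvt_is_derive h0 (is_derive_partial_line (q + xi *: e i) i j).
exists xi, eta; split => //.
move: gE kE; rewrite /g /e !scale0r !addr0 subr0 => gE kE.
rewrite [q + h *: _ + xi *: _]addrAC kE in gE.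
rewrite /second_diff [q + h *: evec R i + _]addrAC; lra.
Qed.

Lemma second_diff_cvg q i j :
  (fun h => second_diff q i j h / h ^+ 2) @ 0^'+ --> hess U q i j.
Proof.
apply/cvgrPdist_lt => e e0.
have Hij : (fun p => hess U p i j) @ q --> hess U q i j.
  exact: continuous_comp (U_C2.2.2 q) (@coord_continuous _ _ _ i j (hess U q)).
have /cvgrPdist_lt/(_ e e0)/nbhs_ballP[r r0 qr] := Hij.
set K := `|evec R i| + `|evec R j| + 1.
have K0 : 0 < K by rewrite /K ltr_wpDl ?addr_ge0.
near=> h.
have h0 : 0 < h by near: h; exact: nbhs_right_gt.
have hr : h * K < r by rewrite -ltr_pdivlMr//; near: h; exact: nbhs_right_lt (divr_gt0 r0 K0).
have [xi [eta [/andP[xi0 xih] /andP[eta0 etah] ->]]] := second_diff_mvt q i j (ltW h0).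
rewrite mulrAC divff ?mul1r ?expf_neq0 ?gt_eqF//; apply: qr.
rewrite -ball_normE /= -addrA opprD addNKr normrN (le_lt_trans (ler_normD _ _))//.
rewrite !normrZ !ger0_norm//; apply: le_lt_trans hr.
have : xi * `|evec R i| <= h * `|evec R i| by rewrite ler_wpM2r.
have : eta * `|evec R j| <= h * `|evec R j| by rewrite ler_wpM2r.
by rewrite /K !mulrDr mulr1; lra.
Unshelve. all: by end_near.
Qed.

Lemma hess_sym q : (hess U q)^T = hess U q.
Proof.
apply/matrixP => i j; rewrite mxE.
have Hji := second_diff_cvg (q := q) (i := j) (j := i).
have Hij : (fun h => second_diff q j i h / h ^+ 2) @ 0^'+ --> hess U q i j.
  by under eq_fun do rewrite second_diff_sym; exact: second_diff_cvg.
by have := cvg_unique (@Rhausdorff R) Hji Hij; apply; exact: fmap_proper_filter.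
Qed.

End HessianSymmetry.

Section Powers.
Variable R : realType.
Implicit Types a e : R.

Lemma powR_mul2_le a e : 0 <= a -> e <= 1 -> (2 * a) `^ e <= 2 * a `^ e.
Proof.
move=> a0 e1; rewrite powRM // ler_wpM2r ?powR_ge0 // ler1_powR //; lra.
Qed.

Lemma powR_div2_ge a e : 0 <= a -> e <= 1 -> a `^ e / 2 <= (a / 2) `^ e.
Proof.
move=> a0 e1; rewrite powRM ?invr_ge0// ler_wpM2l ?powR_ge0// ger1_powR//.
by rewrite invr_gt0 invf_le1 ?ler1n ?ltr0n.
Qed.

Lemma powRrMn a e (k : nat) : 0 <= a -> a `^ (e * k%:R) = (a `^ e) ^+ k.
Proof. by move=> a0; rewrite powRrM powR_mulrn ?powR_ge0. Qed.

Lemma one_add_pow4_cube_le a : 0 <= a -> (1 + a ^+ 4) ^+ 3 <= 2 * (1 + a ^+ 3) ^+ 4.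
Proof.
move=> a0.
have h1 : a ^+ 4 <= a ^+ 3 + a ^+ 6.
  have [a1|a1] := lerP a 1.
    have : a ^+ 4 <= a ^+ 3 by rewrite ler_wiXn2l.
    by have := exprn_ge0 6 a0; lra.
  have : a ^+ 4 <= a ^+ 6 by rewrite ler_eXn2l// ltW.
  by have := exprn_ge0 3 a0; lra.
have h2 : a ^+ 8 <= a ^+ 6 + a ^+ 9.
  have [a1|a1] := lerP a 1.
    have : a ^+ 8 <= a ^+ 6 by rewrite ler_wiXn2l.
    by have := exprn_ge0 9 a0; lra.
  have : a ^+ 8 <= a ^+ 9 by rewrite ler_eXn2l// ltW.
  by have := exprn_ge0 6 a0; lra.
have : 0 <= a ^+ 12 by exact: exprn_ge0.
rewrite (_ : (1 + a ^+ 4) ^+ 3 = 1 + 3 * a ^+ 4 + 3 * a ^+ 8 + a ^+ 12); last by ring.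
rewrite (_ : 2 * (1 + a ^+ 3) ^+ 4 = 2 + 8 * a ^+ 3 + 12 * a ^+ 6 + 8 * a ^+ 9 + 2 * a ^+ 12); last by ring.
have := exprn_ge0 3 a0; have := exprn_ge0 6 a0; have := exprn_ge0 9 a0.
lra.
Qed.

End Powers.

Section Constants.
Variable R : realType.

Lemma C2gb_ge (L mb Lb gbar : R) : 0 <= L -> 0 < mb -> 0 < Lb -> 0 <= gbar ->
  let eps := (mb ^+ 3 / 2 ^+ 4) *
     (2 `^ (3 / 2) * Lb ^+ 2 + 2 `^ (- (1 / 2)) * Num.sqrt gbar * Lb ^+ 3)^-1 in
  128 * Lb ^+ 4 / mb ^+ 3 <= 2 * L + 2 `^ (3 / 2) * Lb ^+ 2 / eps + (gbar / 2) * L ^+ 2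
              + 2 `^ (- (1 / 2)) * gbar `^ (3 / 2) * Lb ^+ 3 / eps.
Proof.
move=> L0 mb0 Lb0 gbar0 /=.
(* Only the second summand matters: [1 / eps >= 16 K Lb^2 / mb^3] and [K^2 = 8]. *)
set K := 2 `^ (3 / 2); set J := 2 `^ (- (1 / 2)).
set D := K * Lb ^+ 2 + J * Num.sqrt gbar * Lb ^+ 3.
set eps := (mb ^+ 3 / 2 ^+ 4) * D^-1.
have K0 : 0 < K by rewrite powR_gt0.
have KK : K * K = 8.
  rewrite -powRD ?pnatr_eq0 ?implybT// (_ : 3 / 2 + 3 / 2 = 3%:R); last by field.
  by rewrite powR_mulrn//; lra.
have KD : K * Lb ^+ 2 <= D.
  by rewrite lerDl !mulr_ge0 ?powR_ge0 ?sqrtr_ge0 ?exprn_ge0// ltW.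
have D0 : 0 < D by rewrite (lt_le_trans _ KD)// mulr_gt0 ?exprn_gt0.
have epsE : eps^-1 = 16 * D / mb ^+ 3.
  by rewrite /eps; field; rewrite !gt_eqF.
have main : 128 * Lb ^+ 4 / mb ^+ 3 <= K * Lb ^+ 2 / eps.
  have : 16 * (K * Lb ^+ 2) * (K * Lb ^+ 2) <= 16 * (K * Lb ^+ 2) * D.
    by apply: ler_wpM2l KD; rewrite !mulr_ge0 ?exprn_ge0 // ltW.
  rewrite (_ : _ * (K * Lb ^+ 2) = 128 * Lb ^+ 4); last by transitivity (16 * (K * K) * Lb ^+ 4); [ring | rewrite KK; ring].
  rewrite epsE (_ : _ * (16 * D / _) = 16 * (K * Lb ^+ 2) * D / mb ^+ 3); last by ring.
  by rewrite ler_pM2r ?invr_gt0 ?exprn_gt0.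
have : 0 <= gbar / 2 * L ^+ 2 by rewrite mulr_ge0 ?exprn_ge0// divr_ge0.
have : 0 <= J * gbar `^ (3 / 2) * Lb ^+ 3 / eps.
  by rewrite -mulrA epsE !mulr_ge0 ?powR_ge0 ?exprn_ge0 ?invr_ge0 ?ltW ?exprn_gt0.
lra.
Qed.

Lemma curvature_constants (mb Lb X Y gamma C : R) :
  0 < mb -> 0 < X -> 0 < Y -> 0 <= gamma ->
  mb * Y <= Lb * X -> X ^+ 3 <= 2 * Y ^+ 4 ->
  gamma * (16 * Lb ^+ 4) <= mb ^+ 3 -> 128 * Lb ^+ 4 / mb ^+ 3 <= C ->
  gamma * (2 * Lb / Y) ^+ 2 <= mb / (2 * X) /\ (2 * Lb / Y) ^+ 2 <= 2 * (mb / (2 * X)) * C.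
Proof.
move=> mb0 X0 Y0 g0 mbLb XY gmb CLb.
have key : mb ^+ 2 * X <= 2 * Lb ^+ 2 * Y ^+ 2.
  have mbY0 : 0 <= mb * Y by rewrite mulr_ge0 ?ltW.
  have sq : (mb * Y) ^+ 2 <= (Lb * X) ^+ 2.
    by rewrite lerXn2r ?nnegrE// (le_trans mbY0 mbLb).
  have h1 := ler_wpM2r (ltW X0) sq; have h2 := ler_wpM2l (sqr_ge0 Lb) XY.
  rewrite -(ler_pM2r (exprn_gt0 2 Y0)); lra.
have mb2 : 0 < mb ^+ 2 by rewrite exprn_gt0.
have Y2 : 0 < Y ^+ 2 by rewrite exprn_gt0.
split.
  rewrite (_ : _ * _ ^+ 2 = 8 * gamma * Lb ^+ 2 * X / (2 * X * Y ^+ 2)); last first.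
    by field; rewrite !gt_eqF.
  rewrite (_ : mb / _ = mb * Y ^+ 2 / (2 * X * Y ^+ 2)); last by field; rewrite !gt_eqF.
  rewrite ler_pM2r ?invr_gt0 ?mulr_gt0// -(ler_pM2l mb2).
  have h3 := ler_wpM2l (_ : 0 <= 8 * gamma * Lb ^+ 2) key.
  have h4 := ler_wpM2r (ltW Y2) gmb.
  by have := h3 (mulr_ge0 (mulr_ge0 _ g0) (sqr_ge0 Lb)); lra.
have {}CLb : 128 * Lb ^+ 4 <= mb ^+ 3 * C by rewrite -ler_pdivrMl ?exprn_gt0// mulrC.
rewrite (_ : _ ^+ 2 = 4 * Lb ^+ 2 * X / (X * Y ^+ 2)); last by field; rewrite !gt_eqF.
rewrite (_ : _ * C = mb * C * Y ^+ 2 / (X * Y ^+ 2)); last by field; rewrite !gt_eqF.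
rewrite ler_pM2r ?invr_gt0 ?mulr_gt0// -(ler_pM2l mb2).
have h5 := ler_wpM2l (_ : 0 <= 4 * Lb ^+ 2) key.
have h6 := ler_wpM2r (ltW Y2) CLb.
have : 0 <= Lb ^+ 4 * Y ^+ 2 by rewrite mulr_ge0 ?exprn_even_ge0 ?ltW.
by have := h5 (mulr_ge0 _ (sqr_ge0 Lb)); lra.
Qed.

Lemma completing_square_bound (B wz W Z u m Lam s gamma C : R) :
  0 < m -> 0 <= Lam -> 0 <= Z -> 0 <= u -> 0 <= s -> s ^+ 2 = 2 * gamma -> 0 <= gamma ->
  m * u ^+ 2 / 2 <= B -> wz <= W * Z -> 0 <= W <= Lam * u ->
  gamma * Lam ^+ 2 <= m -> Lam ^+ 2 <= 2 * m * C ->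
  - B + s / 2 * wz + gamma / 4 * W ^+ 2 <= C * gamma * Z ^+ 2.
Proof.
move=> m0 Lam0 Z0 u0 s0 s2 g0 mB wzW /andP[W0 WL] gLm LmC; have m0' := ltW m0.
have h1 : 4 * m * (m * u ^+ 2 / 2) <= 4 * m * B by rewrite ler_wpM2l// mulr_ge0.
have h2 : 2 * m * s * wz <= 2 * m * s * (Lam * u * Z).
  by rewrite ler_wpM2l ?mulr_ge0// (le_trans wzW)// ler_wpM2r.
have h3 : m * (gamma * W ^+ 2) <= m * (m * u ^+ 2).
  rewrite ler_wpM2l //; apply: (@le_trans _ _ (gamma * (Lam ^+ 2 * u ^+ 2))).
    by rewrite ler_wpM2l// -exprMn lerXn2r ?nnegrE ?mulr_ge0.
  by rewrite mulrA ler_wpM2r ?sqr_ge0.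
have h4 : 2 * m * s * (Lam * u * Z) <= m ^+ 2 * u ^+ 2 + s ^+ 2 * Lam ^+ 2 * Z ^+ 2.
  by have := sqr_ge0 (m * u - s * Lam * Z); rewrite sqrrB; lra.
have h5 : s ^+ 2 * Lam ^+ 2 * Z ^+ 2 <= 4 * m * C * gamma * Z ^+ 2.
  by rewrite s2 ler_wpM2r ?exprn_ge0//; have := ler_wpM2l g0 LmC; lra.
rewrite -(ler_pM2l (_ : 0 < 4 * m)); last by rewrite mulr_gt0.
lra.
Qed.

End Constants.

Section ProposalBound.
Variables (R : realType) (d : nat) (U : 'rV[R]_d -> R) (beta L mb Lb Kb : R).
Hypotheses (beta0 : 0 <= beta) (beta1 : beta < 1) (mb0 : 0 < mb) (Lb0 : 0 <= Lb).
Hypothesis curv : forall x y : 'rV[R]_d, Kb <= enorm x -> enorm y = 1 ->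
  Lb / (1 + enorm x `^ (3 * beta / 4)) >= hessf U x y y /\
  hessf U x y y >= mb / (1 + enorm x `^ beta).

Definition curv_lb (a : R) : R := mb / (2 * (1 + a `^ beta)).
Definition curv_ub (a : R) : R := 2 * Lb / (1 + a `^ (3 * beta / 4)).

Lemma curv_lb_gt0 a : 0 < curv_lb a.
Proof. by rewrite divr_gt0// mulr_gt0// ltr_pwDl ?powR_ge0. Qed.

Lemma curv_ub_ge0 a : 0 <= curv_ub a.
Proof. by rewrite divr_ge0 ?mulr_ge0// addr_ge0 ?powR_ge0. Qed.

Lemma hessf_annulus_bounds a p v : 2 * Kb <= a -> a / 2 <= enorm p <= 2 * a ->
  curv_lb a * enorm v ^+ 2 <= hessf U p v v <= curv_ub a * enorm v ^+ 2.
Proof.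
move=> Ka /andP[ap pa]; have p0 := enorm_ge0 p; have a0 : 0 <= a by lra.
have e0 : 0 <= 3 * beta / 4 by move: beta0; lra.
have e1 : 3 * beta / 4 <= 1 by move: beta1; lra.
rewrite hessfE; apply: dot_mulmx_homogeneous_bounds => y y1.
have Kp : Kb <= enorm p by lra.
have [ub lb] := curv Kp y1.
rewrite -hessfE; apply/andP; split.
- apply: le_trans lb; rewrite ler_wpM2l ?(ltW mb0)//.
  rewrite lef_pV2 ?posrE ?mulr_gt0 ?ltr_pwDl ?powR_ge0//.
  have : enorm p `^ beta <= (2 * a) `^ beta by rewrite ge0_ler_powR ?nnegrE ?mulr_ge0.
  by have := powR_mul2_le a0 (ltW beta1); lra.
- apply: (le_trans ub).
  rewrite (_ : curv_ub a = Lb / ((1 + a `^ (3 * beta / 4)) / 2)); last first.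
    by rewrite /curv_ub; field; rewrite gt_eqF// ltr_pwDl ?powR_ge0.
  rewrite ler_wpM2l// lef_pV2 ?posrE ?divr_gt0 ?ltr_pwDl ?powR_ge0//.
  have : (a / 2) `^ (3 * beta / 4) <= enorm p `^ (3 * beta / 4).
    by apply: ge0_ler_powR; rewrite // nnegrE ?divr_ge0.
  by have := powR_div2_ge a0 e1; lra.
Qed.

Lemma curv_bounds_consistent (x y : 'rV[R]_d) : Kb <= enorm x -> enorm y = 1 ->
  mb * (1 + enorm x `^ (3 * beta / 4)) <= Lb * (1 + enorm x `^ beta).
Proof.
move=> Kx y1; have [ub lb] := curv Kx y1; have := le_trans lb ub.
by rewrite ler_pdivrMr ?ltr_pwDl ?powR_ge0// mulrAC ler_pdivlMr ?ltr_pwDl ?powR_ge0.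
Qed.

Lemma curv_ub_sqr_le a gamma C : 0 <= a ->
  mb * (1 + a `^ (3 * beta / 4)) <= Lb * (1 + a `^ beta) -> 0 <= gamma ->
  gamma * (16 * Lb ^+ 4) <= mb ^+ 3 -> 128 * Lb ^+ 4 / mb ^+ 3 <= C ->
  gamma * curv_ub a ^+ 2 <= curv_lb a /\ curv_ub a ^+ 2 <= 2 * curv_lb a * C.
Proof.
move=> a0; set A := a `^ (beta / 4).
have aP : a `^ beta = A ^+ 4 by rewrite -powRrMn// divfK ?pnatr_eq0.
have aQ : a `^ (3 * beta / 4) = A ^+ 3 by rewrite -powRrMn// [3 * _]mulrC mulrAC.
rewrite /curv_lb /curv_ub aP aQ => comp g0 gmb CLb.
apply: curvature_constants; rewrite ?ltr_pwDl ?exprn_ge0 ?powR_ge0//.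
exact: one_add_pow4_cube_le (powR_ge0 _ _).
Qed.

Hypotheses (U_C2 : C2 U) (grad0 : grad U 0 = 0).
Hypothesis hessL : forall x y : 'rV[R]_d, enorm (y *m (hess U x)^T) <= L * enorm y.

Lemma enorm_proposal_step_le gamma x z : 0 < gamma -> gamma * L <= 4^-1 ->
  4 * Num.sqrt (2 * gamma) * enorm z <= enorm x ->
  enorm (proposal U gamma x z - x) <= enorm x / 2.
Proof.
move=> g0 gL zx; set s := Num.sqrt (2 * gamma).
have gx : enorm (grad U x) <= L * enorm x.
  have := enorm_gradB_le U_C2 (p := 0) (v := x) (fun t _ => hessL _ _).
  by rewrite add0r grad0 subr0.
have -> : proposal U gamma x z - x = s *: z - gamma *: grad U x.
  by rewrite /proposal addrAC [x - _ - x]addrAC subrr add0r addrC.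
apply: le_trans (ler_enormD _ _) _.
rewrite enormN !enormZ !ger0_norm ?sqrtr_ge0 ?(ltW g0)//.
have : gamma * enorm (grad U x) <= gamma * (L * enorm x) by rewrite ler_wpM2l ?(ltW g0).
have : gamma * L * enorm x <= 4^-1 * enorm x by rewrite ler_wpM2r ?enorm_ge0.
by move: zx; rewrite -/s; lra.
Qed.

Lemma bregman_grad_bounds p v : 2 * Kb <= enorm p -> enorm v <= enorm p / 2 ->
  curv_lb (enorm p) * enorm v ^+ 2 / 2 <= bregman U p (p + v) /\
  enorm (grad U (p + v) - grad U p) <= curv_ub (enorm p) * enorm v.
Proof.
move=> Kp vp.
have seg t : 0 <= t <= 1 -> forall u,
    curv_lb (enorm p) * enorm u ^+ 2 <= hessf U (p + t *: v) u u
    <= curv_ub (enorm p) * enorm u ^+ 2.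
  by move=> t01 u; apply: hessf_annulus_bounds => //; exact: enorm_line_bounds.
split.
  by apply: (bregman_ge U_C2 (p := p) (v := v)) => t t01; case/andP: (seg t t01 v).
apply: (enorm_gradB_le U_C2 (p := p) (v := v)) => t t01.
apply: enorm_mulmx_psd_le; [by rewrite trmxK hess_sym | exact: curv_ub_ge0 | move=> u].
rewrite -hessfE; have /andP[lo ->] := seg t t01 u; rewrite andbT.
by rewrite (le_trans _ lo)// mulr_ge0 ?sqr_ge0// ltW// curv_lb_gt0.
Qed.

Lemma tau_le x z gamma C :
  0 < gamma -> gamma * L <= 4^-1 -> gamma * (16 * Lb ^+ 4) <= mb ^+ 3 ->
  128 * Lb ^+ 4 / mb ^+ 3 <= C -> 2 * Kb <= enorm x ->
  4 * Num.sqrt (2 * gamma) * enorm z <= enorm x ->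
  tau U gamma x z <= C * gamma * enorm z ^+ 2.
Proof.
move=> g0 gL gLb CLb Kx zx.
set a := enorm x; set y := proposal U gamma x z; set v := y - x.
set w := grad U y - grad U x; set s := Num.sqrt (2 * gamma).
have s0 : 0 < s by rewrite sqrtr_gt0 mulr_gt0.
have s2 : s ^+ 2 = 2 * gamma by rewrite sqr_sqrtr// mulr_ge0// ltW.
have C0 : 0 <= C.
  by apply: le_trans CLb; rewrite divr_ge0 ?mulr_ge0 ?exprn_even_ge0 ?exprn_ge0 ?(ltW mb0).
have xvy : x + v = y by rewrite subrKC.
have [hB hw] := bregman_grad_bounds Kx (enorm_proposal_step_le g0 gL zx).
rewrite -/a -/v xvy -/w in hB hw; rewrite tauE// -/y -/w -/s.
have [v0|v0] := eqVneq v 0.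
  rewrite /w -xvy v0 addr0 subrr dot0l enorm_sqr dot0l /bregman !subrr dotC dot0l.
  by have := mulr_ge0 (mulr_ge0 C0 (ltW g0)) (sqr_ge0 (enorm z)); lra.
(* Comparing the two curvature bounds at [x] needs a unit vector, here [v / |v|]. *)
have e1 : enorm ((enorm v)^-1 *: v) = 1.
  by rewrite enormZ ger0_norm ?invr_ge0 ?enorm_ge0// mulVf// enorm_eq0.
have Ka : Kb <= a by move: Kx (enorm_ge0 x); rewrite /a; lra.
have [cg cC] := curv_ub_sqr_le (enorm_ge0 x) (curv_bounds_consistent Ka e1) (ltW g0) gLb CLb.
apply: completing_square_bound (curv_lb_gt0 a) (curv_ub_ge0 a) (enorm_ge0 z) (enorm_ge0 v)
  (ltW s0) s2 (ltW g0) hB (cauchy_schwarz w z) _ cg cC.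
by rewrite enorm_ge0 hw.
Qed.

End ProposalBound.

Theorem lemma6 (R : realType) (d : nat) (U : 'rV[R]_d -> R)
  (beta L mb Lb Kb gbar : R) :
  0 <= beta -> beta < 1 ->
  C2 U ->
  grad U 0 = 0 ->
  (forall x y : 'rV[R]_d, enorm (y *m (hess U x)^T) <= L * enorm y) ->
  0 < mb -> 0 <= Lb -> 0 <= Kb ->
  (forall x y : 'rV[R]_d, Kb <= enorm x -> enorm y = 1 ->
     Lb / (1 + enorm x `^ (3 * beta / 4)) >= hessf U x y y /\
     hessf U x y y >= mb / (1 + enorm x `^ beta)) ->
  gbar <= Num.min (4 * L)^-1 (mb ^+ 3 / (2 ^+ 4 * Lb ^+ 4)) ->
  let eps := (mb ^+ 3 / 2 ^+ 4) *
     (2 `^ (3 / 2) * Lb ^+ 2 + 2 `^ (- (1 / 2)) * Num.sqrt gbar * Lb ^+ 3)^-1 in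
  let C2gb := 2 * L + 2 `^ (3 / 2) * Lb ^+ 2 / eps + (gbar / 2) * L ^+ 2
              + 2 `^ (- (1 / 2)) * gbar `^ (3 / 2) * Lb ^+ 3 / eps in
  let Kt := Num.max (4 * Kb * (1 + L / mb)) ((4 * Kb * (1 + L / mb)) `^ (1 - beta)^-1) in
  let Kbar := Num.max (2 * L * Kb / Lb) ((2 * L * Kb / Lb) `^ (1 - 3 * beta / 4)^-1) in
  forall (gamma : R) (x z : 'rV[R]_d),
    0 < gamma -> gamma <= gbar ->
    Num.max (2 * Kb) (Num.max Kt Kbar) <= enorm x ->
    enorm z <= enorm x / (4 * Num.sqrt (2 * gamma)) ->
    tau U gamma x z <= C2gb * gamma * enorm z ^+ 2.
Proof.
move=> b0 b1 U_C2 grad0 hessL mb0 Lb0 Kb0 curv hg eps C2gb Kt Kbar gamma x z g0 g_gbar hx hz.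
move: hg; rewrite le_min => /andP[gbarL gbarLb].
have gbar0 : 0 < gbar := lt_le_trans g0 g_gbar.
have L0 : 0 < L by move: (lt_le_trans gbar0 gbarL); rewrite invr_gt0 pmulr_rgt0.
have Lb_gt0 : 0 < Lb.
  rewrite lt_def Lb0 andbT; apply: contraTneq gbarLb => ->.
  by rewrite expr0n mulr0 invr0 mulr0 -ltNge.
apply: (tau_le b0 b1 mb0 Lb0 curv U_C2 grad0 hessL) => //.
- have L4 : 0 < 4 * L by rewrite mulr_gt0.
  have := ler_wpM2l (ltW L4) (le_trans g_gbar gbarL).
  by rewrite mulfV ?gt_eqF//; lra.
- have := le_trans g_gbar gbarLb.
  by rewrite ler_pdivlMr ?mulr_gt0 ?exprn_gt0// -natrX.
- exact: C2gb_ge (ltW L0) mb0 Lb_gt0 (ltW gbar0).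
- by move: hx; rewrite ge_max => /andP[].
- by rewrite -ler_pdivlMl ?mulr_gt0 ?sqrtr_gt0 ?mulr_gt0// mulrC.
Qed.
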